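(* Let $\phi:\mathbb{K}[x_{i|A}: i\in[n],A\subseteq[n]\setminus\{i\}]\to\mathbb{K}[y_i,\beta_j: i,j\in[n]]$, $x_{i|A}\mapsto y_i\prod_{j\in A}\beta_j$, and $I_\phi=\ker\phi=I_{\phi'}\cap\mathbb{K}[x_{i|A}:i\notin A]$. Let $T=T_1\cup T_2$ where $T_1$ consists of those elements of $G_L$ all of whose variables lie in $\mathbb{K}[x_{i|A}:i\notin A]$ (i.e. binomials $x_{i|A}x_{j|B}-x_{i|A\cap B}x_{j|A\cup B}$ in $G_L$ with $i\le j$, $i\notin A$, $j\notin A\cup B$), and $$T_2=\{x_{i|A}x_{j|B}-x_{i|(A\cap B)\cup\{j\}}\,x_{j|(A\setminus\{j\})\cup B}:\ i<j,\ i\notin A,\ j\notin B,\ j\in A,\ x_{i|A},x_{j|B}\text{ incomparable in }L\}.$$ Then $T$ generates $I_\phi$.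
   Context: $\phi'$ is the extension of $\phi$ to $\mathbb{K}[x_{i|A}: i\in[n],A\subseteq[n]]$ by the same formula, and $I_{\phi'}=\ker\phi'$. $L$ is the lattice on the variables $x_{i|A}$ with $x_{i|A}\le x_{j|B}$ iff $i\le j$ and $A\subseteq B$. $G_L=\{x_{i|A}x_{j|B}-x_{\min(i,j)|A\cap B}\,x_{\max(i,j)|A\cup B}: x_{i|A},x_{j|B}\text{ incomparable in }L\}$. *)

From HB Require Import structures.
From mathcomp Require Import all_boot all_order all_algebra.
From mathcomp Require Import mpoly.
Set Implicit Arguments. Unset Strict Implicit. Unset Printing Implicit Defensive.
Import Order.TTheory GRing.Theory.
Local Open Scope ring_scope.

(* Index set of the variables x_{i|A}, i in [n], A subset of [n] \ {i}.
   [n] is modelled by 'I_n. *)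
Definition Vx (n : nat) := {x : 'I_n * {set 'I_n} | x.1 \notin x.2}.

Definition NV (n : nat) := #|{: Vx n}|.

Definition Xring (K : fieldType) (n : nat) := {mpoly K[NV n]}.
(* Target ring K[y_1..y_n, beta_1..beta_n]: y_i = 'X_(lshift n i),
   beta_j = 'X_(rshift n j). *)
Definition Yring (K : fieldType) (n : nat) := {mpoly K[n + n]}.

(* The variable x_{i|A} (for i notin A); 0 is a dummy value when i \in A,
   which never occurs below. *)
Definition xvar (K : fieldType) (n : nat) (i : 'I_n) (A : {set 'I_n}) : Xring K n :=
  match @insub _ (fun x : 'I_n * {set 'I_n} => x.1 \notin x.2) (Vx n) (i, A) with
  | Some v => 'X_(enum_rank v)
  | None => 0
  end.

Definition phi_img (K : fieldType) (n : nat) (v : Vx n) : Yring K n :=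
  'X_(lshift n (val v).1) * \prod_(j in (val v).2) 'X_(rshift n j).

Definition phi (K : fieldType) (n : nat) (p : Xring K n) : Yring K n :=
  mmap (fun c : K => c%:MP) (fun k : 'I_(NV n) => phi_img K (enum_val k)) p.

Definition L_le (n : nat) (i : 'I_n) (A : {set 'I_n}) (j : 'I_n) (B : {set 'I_n}) : bool :=
  (i <= j)%N && (A \subset B).
Definition L_incomp (n : nat) (i : 'I_n) (A : {set 'I_n}) (j : 'I_n) (B : {set 'I_n}) : bool :=
  ~~ L_le i A j B && ~~ L_le j B i A.

(* T1: the elements of G_L all of whose variables x_{k|C} satisfy k notin C. *)
Definition T1_pred (n : nat) (i : 'I_n) (A : {set 'I_n}) (j : 'I_n) (B : {set 'I_n}) : bool :=
  [&& L_incomp i A j B, i \notin A, j \notin B,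
      (if (i <= j)%N then i else j) \notin A :&: B &
      (if (i <= j)%N then j else i) \notin A :|: B].

Definition T1_bin (K : fieldType) (n : nat) (i : 'I_n) (A : {set 'I_n}) (j : 'I_n) (B : {set 'I_n})
  : Xring K n :=
  xvar K i A * xvar K j B
  - (if (i <= j)%N then xvar K i (A :&: B) * xvar K j (A :|: B)
     else xvar K j (A :&: B) * xvar K i (A :|: B)).

Definition T2_pred (n : nat) (i : 'I_n) (A : {set 'I_n}) (j : 'I_n) (B : {set 'I_n}) : bool :=
  [&& (i < j)%N, i \notin A, j \notin B, j \in A & L_incomp i A j B].

Definition T2_bin (K : fieldType) (n : nat) (i : 'I_n) (A : {set 'I_n}) (j : 'I_n) (B : {set 'I_n})
  : Xring K n :=
  xvar K i A * xvar K j B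
  - xvar K i ((A :&: B) :|: [set j]) * xvar K j ((A :\ j) :|: B).

Definition quad (n : nat) := ('I_n * {set 'I_n} * 'I_n * {set 'I_n})%type.

Definition Tgens (K : fieldType) (n : nat) : seq (Xring K n) :=
  [seq T1_bin K q.1.1.1 q.1.1.2 q.1.2 q.2
     | q <- enum [pred q : quad n | T1_pred q.1.1.1 q.1.1.2 q.1.2 q.2]]
  ++ [seq T2_bin K q.1.1.1 q.1.1.2 q.1.2 q.2
     | q <- enum [pred q : quad n | T2_pred q.1.1.1 q.1.1.2 q.1.2 q.2]].

Definition in_ideal_gen (R : comRingType) (s : seq R) (p : R) : Prop :=
  exists c : 'I_(size s) -> R, p = \sum_(k < size s) c k * s`_k.

From Pilot Require Import Defs.
From HB Require Import structures.
From mathcomp Require Import all_boot all_order all_algebra.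
From mathcomp Require Import mpoly.
From mathcomp Require Import zify.
Set Implicit Arguments. Unset Strict Implicit. Unset Printing Implicit Defensive.
Import Order.TTheory GRing.Theory.
Local Open Scope ring_scope.

(* Call a monomial standard if no two of its factors x_{i|A}, x_{j|B} with
   (i, |A|) <= (j, |B|) lexicographically admit some c in A \ B other than j.
   For such a pair, the binomial of T_1 (if j \notin A) or of T_2 (if j \in A)
   starting with x_{i|A} x_{j|B} trades it for a pair of larger total weight
   \sum |A| (|A| + 3 i); the weight is bounded in each degree, so every monomial
   is congruent modulo (T) to a standard one.  A standard monomial is recovered
   from its image: its lexicographically largest factor x_{i|A} has i the largest
   index of a y present and A the set of all c <> i with beta_c present.  Thus phi
   is injective on standard monomials, and its kernel is generated by T. *)

Section IdealGen.
Variables (R : comRingType) (s : seq R).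
Local Notation ig := (in_ideal_gen s).

Lemma in_ideal_gen0 : ig 0.
Proof. by exists (fun _ => 0); rewrite big1 // => k _; rewrite mul0r. Qed.

Lemma in_ideal_genD p q : ig p -> ig q -> ig (p + q).
Proof.
move=> [c1 ->] [c2 ->]; exists (fun k => c1 k + c2 k); rewrite -big_split /=.
by apply: eq_bigr => k _; rewrite mulrDl.
Qed.

Lemma in_ideal_genMl r p : ig p -> ig (r * p).
Proof.
move=> [c ->]; exists (fun k => r * c k); rewrite mulr_sumr.
by apply: eq_bigr => k _; rewrite mulrA.
Qed.

Lemma in_ideal_gen_mem g : g \in s -> ig g.
Proof.
move=> gs; pose k0 : 'I_(size s) := Ordinal (etrans (index_mem g s) gs).
exists (fun k => (k == k0)%:R); rewrite (bigD1 k0) //= eqxx mul1r nth_index //.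
by rewrite big1 ?addr0 // => k /negbTE ->; rewrite mul0r.
Qed.

End IdealGen.

Lemma sum_nat_mulb_gt0 (I : finType) (F : I -> nat) (b : pred I) :
  (0 < \sum_i F i * b i)%N = [exists i, (0 < F i)%N && b i].
Proof.
rewrite lt0n sum_nat_eq0 negb_forall; apply: eq_existsb => i.
by rewrite muln_eq0 eqb0 negb_or negbK lt0n.
Qed.

(* The factor 3 lets the gain 3 (j - i) r of the label term in a T2 move outweigh
   the possible loss 2 r of the square term. *)
Definition weight (s l : nat) := (s * (s + 3 * l))%N.

Lemma weight_T1 i j a p q : (i <= j)%N -> (0 < p)%N -> (i < j)%N || (0 < q)%N ->
  (weight (a + p) i + weight (a + q) j < weight a i + weight (a + p + q) j)%N.
Proof. by rewrite /weight => hij hp /orP[] h; nia. Qed.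

Lemma weight_T2 i j a r q : (i < j)%N -> (0 < r)%N ->
  (weight (a + r + 1) i + weight (a + q) j < weight (a + 1) i + weight (a + r + q) j)%N.
Proof. by rewrite /weight => hij hr; nia. Qed.

Section Kernel.
Variables (K : fieldType) (n : nat).
Local Notation V := (Vx n).
Local Notation X := (Xring K n).
Local Notation J := (in_ideal_gen (Tgens K n)).
Local Notation phi := (@phi K n).
Implicit Types (u w : V) (m : 'X_{1..NV n}) (k a b : 'I_(NV n)) (q : X).
Implicit Types (i j c : 'I_n) (A B : {set 'I_n}).

Definition lab u : 'I_n := (val u).1.
Definition st u : {set 'I_n} := (val u).2.
Definition var k : V := enum_val k.
Definition mkV i A (h : i \notin A) : V :=
  @exist _ (fun x : 'I_n * {set 'I_n} => x.1 \notin x.2) (i, A) h.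

Lemma varK : cancel enum_rank var. Proof. exact: enum_rankK. Qed.

Lemma lab_notin_st u : lab u \notin st u. Proof. exact: valP u. Qed.

Lemma V_inj u w : lab u = lab w -> st u = st w -> u = w.
Proof.
move=> hl hs; apply: val_inj; move: hl hs; rewrite /lab /st.
by case: (val u) => ? ?; case: (val w) => ? ? /= -> ->.
Qed.

Lemma xvarE i A (h : i \notin A) : xvar K i A = 'X_(enum_rank (mkV h)).
Proof. by rewrite /xvar (@insubT _ (fun x : 'I_n * {set 'I_n} => x.1 \notin x.2) V (i, A) h). Qed.

Lemma card_le_n A : (#|A| <= n)%N.
Proof. by rewrite -[n in (_ <= n)%N]card_ord max_card. Qed.

Definition Dv u : 'X_{1..n+n} :=
  (U_(lshift n (lab u)) + \sum_(j in st u) U_(rshift n j))%MM.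

Lemma Dv_lshift u i : Dv u (lshift n i) = (lab u == i).
Proof.
rewrite /Dv mnmDE mnm_sumE mnm1E eq_lshift big1 ?addn0 // => j _.
by rewrite mnm1E; apply/eqP; rewrite eqb0 -val_eqE /=; have := ltn_ord i; lia.
Qed.

Lemma Dv_rshift u c : Dv u (rshift n c) = (c \in st u).
Proof.
rewrite /Dv mnmDE mnm_sumE mnm1E.
have -> : (lshift n (lab u) == rshift n c) = false.
  by apply/negbTE; rewrite -val_eqE /=; have := ltn_ord (lab u); lia.
rewrite add0n (eq_bigr (fun j => (j == c) : nat)) => [|j _]; last first.
  by rewrite mnm1E eq_rshift.
have [hc | hc] := boolP (c \in st u).
  by rewrite (bigD1 c) //= eqxx big1 // => j /andP[_ /negbTE ->].
by rewrite big1 // => j hj; case: eqP hj hc => // -> ->.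
Qed.

Lemma Dv2_eq u w u' w' :
  (forall i, (lab u == i) + (lab w == i) = (lab u' == i) + (lab w' == i))%N ->
  (forall c, (c \in st u) + (c \in st w) = (c \in st u') + (c \in st w'))%N ->
  (Dv u + Dv w = Dv u' + Dv w')%MM.
Proof.
move=> hl hs; apply/mnmP => x; rewrite (mnmDE _ (Dv u)) (mnmDE _ (Dv u')) -(splitK x).
case: (split x) => [i|c].
  by change (unsplit (inl i)) with (lshift n i); rewrite !Dv_lshift.
by change (unsplit (inr c)) with (rshift n c); rewrite !Dv_rshift.
Qed.

Definition Dmn m : 'X_{1..n+n} := (\sum_k Dv (var k) *+ m k)%MM.

Lemma DmnU k : Dmn U_(k)%MM = Dv (var k).
Proof.
rewrite /Dmn (bigD1 k) //= mnm1E eqxx big1 ?addm0 // => k' hk.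
by rewrite mnm1E eq_sym (negbTE hk).
Qed.

Lemma Dmn_coord m x : Dmn m x = (\sum_k m k * Dv (var k) x)%N.
Proof. by rewrite /Dmn mnm_sumE; apply: eq_bigr => k _; rewrite mulmnE mulnC. Qed.

Lemma DmnD m1 m2 : Dmn (m1 + m2)%MM = (Dmn m1 + Dmn m2)%MM.
Proof.
apply/mnmP => x; rewrite mnmDE !Dmn_coord -big_split.
by apply: eq_bigr => k _; rewrite mnmDE mulnDl.
Qed.

Lemma Dmn_lshift_gt0 m i :
  (0 < Dmn m (lshift n i))%N = [exists k, (0 < m k)%N && (lab (var k) == i)].
Proof.
by rewrite Dmn_coord (eq_bigr _ (fun k _ => congr1 _ (Dv_lshift _ i))) sum_nat_mulb_gt0.
Qed.

Lemma Dmn_rshift_gt0 m c :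
  (0 < Dmn m (rshift n c))%N = [exists k, (0 < m k)%N && (c \in st (var k))].
Proof.
by rewrite Dmn_coord (eq_bigr _ (fun k _ => congr1 _ (Dv_rshift _ c))) sum_nat_mulb_gt0.
Qed.

Lemma phiB q q' : phi (q - q') = phi q - phi q'.
Proof. exact: raddfB. Qed.

Lemma phiM q q' : phi (q * q') = phi q * phi q'.
Proof. exact: rmorphM. Qed.

Lemma phi_sum (I : Type) (r : seq I) (F : I -> X) :
  phi (\sum_(i <- r) F i) = \sum_(i <- r) phi (F i).
Proof. exact: raddf_sum. Qed.

Lemma phiX m : phi 'X_[m] = 'X_[Dmn m].
Proof.
rewrite /Defs.phi mmapX /mmap1 -mprodXnE; apply: eq_bigr => k _.
by rewrite /phi_img /Dv mpolyXD mprodXE.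
Qed.

Lemma phiE q : phi q = \sum_(m <- msupp q) q@_m *: 'X_[Dmn m].
Proof.
rewrite {1}(mpolyE q) phi_sum; apply: eq_bigr => m _.
by rewrite -phiX /Defs.phi mmapZ mul_mpolyC.
Qed.

Lemma phi_binomial_eq0 u w u' w' :
  (forall i, (lab u == i) + (lab w == i) = (lab u' == i) + (lab w' == i))%N ->
  (forall c, (c \in st u) + (c \in st w) = (c \in st u') + (c \in st w'))%N ->
  phi ('X_(enum_rank u) * 'X_(enum_rank w) - 'X_(enum_rank u') * 'X_(enum_rank w')) = 0.
Proof.
move=> hl hs; rewrite -!mpolyXD phiB !phiX !DmnD !DmnU !varK.
by rewrite (Dv2_eq hl hs) subrr.
Qed.

Lemma phi_T1_bin i A j B : T1_pred i A j B -> phi (T1_bin K i A j B) = 0.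
Proof.
case/and5P=> _ hu hw hm hM.
have hIU x : ((x \in A) + (x \in B) = (x \in A :&: B) + (x \in A :|: B))%N.
  by rewrite !inE; case: (x \in A); case: (x \in B).
rewrite /T1_bin; case: (leqP i j) => hij /= in hm hM *.
  rewrite (xvarE hu) (xvarE hw) (xvarE hm) (xvarE hM).
  by apply: phi_binomial_eq0 => x.
rewrite (xvarE hu) (xvarE hw) (xvarE hm) (xvarE hM).
by apply: phi_binomial_eq0 => x; rewrite /lab /st //= addnC.
Qed.

Lemma phi_T2_bin i A j B : T2_pred i A j B -> phi (T2_bin K i A j B) = 0.
Proof.
case/and5P=> lij hu hw hjA _.
have hu' : i \notin (A :&: B) :|: [set j] by rewrite !inE (negbTE hu) /= neq_ltn lij.
have hw' : j \notin (A :\ j) :|: B by rewrite !inE eqxx /= (negbTE hw).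
rewrite /T2_bin (xvarE hu) (xvarE hw) (xvarE hu') (xvarE hw').
apply: phi_binomial_eq0 => x //; rewrite /st /= !inE.
by case: eqP => [->|_] /=; [rewrite hjA (negbTE hw) | case: (x \in A); case: (x \in B)].
Qed.

Lemma phi_Tgens g : g \in Tgens K n -> phi g = 0.
Proof.
rewrite mem_cat => /orP[] /mapP[[[[i A] j] B]]; rewrite mem_enum /= => hpred ->.
  exact: phi_T1_bin.
exact: phi_T2_bin.
Qed.

Lemma phi_in_ideal_eq0 q : J q -> phi q = 0.
Proof.
move=> [c ->]; rewrite phi_sum big1 // => k _.
by rewrite phiM (phi_Tgens (mem_nth 0 (ltn_ord k))) mulr0.
Qed.

Lemma T1_bin_in i A j B : T1_pred i A j B -> T1_bin K i A j B \in Tgens K n.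
Proof. by move=> h; rewrite mem_cat (map_f _ (_ : (i, A, j, B) \in _)) ?mem_enum. Qed.

Lemma T2_bin_in i A j B : T2_pred i A j B -> T2_bin K i A j B \in Tgens K n.
Proof. by move=> h; rewrite mem_cat (map_f _ (_ : (i, A, j, B) \in _)) ?orbT ?mem_enum. Qed.

Definition key u := (lab u * n.+1 + #|st u|)%N.

Lemma key_leP u w : (key u <= key w)%N ->
  (lab u <= lab w)%N /\ (lab u = lab w -> #|st u| <= #|st w|)%N.
Proof.
rewrite /key => h; have := card_le_n (st u); have := card_le_n (st w).
by split => [|e]; [nia | move: h; rewrite e; lia].
Qed.

Definition exchangeable u w :=
  (key u <= key w)%N && [exists c, [&& c \in st u, c \notin st w & c != lab w]].

Definition vweight u := weight #|st u| (lab u).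

Lemma exchange_T1 i A j B (hu : i \notin A) (hw : j \notin B) c :
  (i <= j)%N -> (i = j -> #|A| <= #|B|)%N -> j \notin A -> c \in A -> c \notin B ->
  exists u' w' : V,
    'X_(enum_rank (mkV hu)) * 'X_(enum_rank (mkV hw))
      - 'X_(enum_rank u') * 'X_(enum_rank w') \in Tgens K n
    /\ (vweight (mkV hu) + vweight (mkV hw) < vweight u' + vweight w')%N.
Proof.
move=> hij hcard hjA hcA hcB.
have hAB : ~~ (A \subset B) by apply/subsetPn; exists c.
have hBA : (j <= i)%N -> ~~ (B \subset A).
  move=> hji; apply: contraNN hcB => sBA.
  have eij : i = j by apply: val_inj; apply/eqP; rewrite eqn_leq hij hji.
  suff -> : B = A by [].
  by apply/eqP; rewrite eqEcard sBA hcard.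
have hu' : i \notin A :&: B by rewrite inE (negbTE hu).
have hw' : j \notin A :|: B by rewrite inE negb_or hjA hw.
exists (mkV hu'), (mkV hw'); split.
  rewrite -!xvarE (_ : _ - _ = T1_bin K i A j B) ?T1_bin_in //; last by rewrite /T1_bin hij.
  rewrite /T1_pred /L_incomp /L_le hij hAB hu hw hu' hw' /= andbT.
  by apply/andP => -[hji]; apply/negP; exact: hBA.
rewrite /vweight /lab /st /=.
have cA := cardsID B A; have cB := cardsID A B; have cU := cardsUI A B.
rewrite setIC in cB.
have hp : (0 < #|A :\: B|)%N by apply/card_gt0P; exists c; rewrite inE hcA hcB.
have hq : (i < j)%N || (0 < #|B :\: A|)%N.
  case: ltnP => //= hji; rewrite lt0n cards_eq0 setD_eq0; exact: hBA.
rewrite -cA -cB (_ : #|A :|: B| = #|A :&: B| + #|A :\: B| + #|B :\: A|)%N; last by lia.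
exact: weight_T1.
Qed.

Lemma exchange_T2 i A j B (hu : i \notin A) (hw : j \notin B) c :
  (i <= j)%N -> j \in A -> c \in A -> c \notin B -> c != j ->
  exists u' w' : V,
    'X_(enum_rank (mkV hu)) * 'X_(enum_rank (mkV hw))
      - 'X_(enum_rank u') * 'X_(enum_rank w') \in Tgens K n
    /\ (vweight (mkV hu) + vweight (mkV hw) < vweight u' + vweight w')%N.
Proof.
move=> hij hjA hcA hcB hcj.
have lij : (i < j)%N.
  by rewrite ltn_neqAle hij andbT; apply/eqP => /val_inj eij; rewrite eij hjA in hu.
have hAB : ~~ (A \subset B) by apply/subsetPn; exists c.
have hu' : i \notin (A :&: B) :|: [set j] by rewrite !inE (negbTE hu) /= neq_ltn lij.
have hw' : j \notin (A :\ j) :|: B by rewrite !inE eqxx /= (negbTE hw).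
exists (mkV hu'), (mkV hw'); split.
  rewrite -!xvarE; apply: T2_bin_in.
  by rewrite /T2_pred /L_incomp /L_le lij hu hw hjA (ltnW lij) (ltn_geF lij) /= hAB.
rewrite /vweight /lab /st /=.
have cA := cardsID B A; have cB := cardsID A B; rewrite setIC in cB.
have jAB : j \in A :\: B by rewrite inE hjA hw.
have cAB : #|A :\: B| = #|A :\: B :\ j|.+1 by rewrite (cardsD1 j) jAB.
have cAj : #|A| = #|A :\ j|.+1 by rewrite (cardsD1 j) hjA.
have cI : #|(A :&: B) :|: [set j]| = (#|A :&: B| + 1)%N.
  by rewrite setUC cardsU1 !inE (negbTE hw) andbF addnC.
have cU := cardsUI (A :\ j) B.
rewrite (_ : (A :\ j) :&: B = A :&: B) in cU; last first.
  by apply/setP => x; rewrite !inE; case: eqP => // ->; rewrite (negbTE hw) !andbF.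
have hr : (0 < #|A :\: B :\ j|)%N by apply/card_gt0P; exists c; rewrite !inE hcA hcB hcj.
rewrite cI -cB (_ : #|A| = #|A :&: B| + #|A :\: B :\ j| + 1)%N; last by lia.
rewrite (_ : #|A :\ j :|: B| = #|A :&: B| + #|A :\: B :\ j| + #|B :\: A|)%N; last by lia.
exact: weight_T2.
Qed.

Lemma exchange u w : exchangeable u w ->
  exists u' w' : V,
    'X_(enum_rank u) * 'X_(enum_rank w) - 'X_(enum_rank u') * 'X_(enum_rank w') \in Tgens K n
    /\ (vweight u + vweight w < vweight u' + vweight w')%N.
Proof.
case/andP=> /key_leP[hij hcard] /existsP[c /and3P[hcA hcB hcj]].
case: u w hij hcard hcA hcB hcj => [[i A] hu] [[j B] hw].
rewrite /lab /st /= => hij hcard hcA hcB hcj.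
have [hjA | hjA] := boolP (j \in A).
  exact: (exchange_T2 hu hw hij hjA hcA hcB hcj).
exact: (exchange_T1 hu hw hij hcard hjA hcA hcB).
Qed.

Definition standard m :=
  ~~ [exists a, exists b, [&& (0 < m a)%N, (0 < m b)%N & exchangeable (var a) (var b)]].

Definition mweight m := (\sum_k m k * vweight (var k))%N.

Lemma mweightD m1 m2 : mweight (m1 + m2)%MM = (mweight m1 + mweight m2)%N.
Proof. by rewrite /mweight -big_split; apply: eq_bigr => k _; rewrite mnmDE mulnDl. Qed.

Lemma mweightU k : mweight U_(k)%MM = vweight (var k).
Proof.
rewrite /mweight (bigD1 k) //= mnm1E eqxx mul1n big1 ?addn0 // => k' hk.
by rewrite mnm1E eq_sym (negbTE hk).
Qed.

Lemma mweight_le m : (mweight m <= mdeg m * weight n n)%N.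
Proof.
rewrite /mweight mdegE big_distrl /=; apply: leq_sum => k _; rewrite leq_mul2l.
apply/orP; right; apply: leq_mul (card_le_n _) (leq_add (card_le_n _) _).
by rewrite leq_mul2l ltnW.
Qed.

Lemma exchange_monomial m : ~~ standard m ->
  exists m', [/\ J ('X_[m] - 'X_[m']), mdeg m' = mdeg m & (mweight m < mweight m')%N].
Proof.
rewrite negbK => /existsP[a /existsP[b /and3P[ha hb hab]]].
have [u' [w' [hT hlt]]] := exchange hab.
have a_neq_b : a != b.
  by apply: contraTneq hab => ->; apply/nandP; right; apply/existsPn => c; case: (c \in _).
have hle : (U_(a) + U_(b) <= m)%MM.
  apply/mnm_lepP => k; rewrite mnmDE !mnm1E.
  have [eak | _] := eqVneq a k; have [ebk | _] := eqVneq b k.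
  - by rewrite eak ebk eqxx in a_neq_b.
  - by rewrite -eak.
  - by rewrite -ebk.
  - by [].
set r := (m - (U_(a) + U_(b)))%MM.
have hm : m = (r + (U_(a) + U_(b)))%MM by rewrite submK.
exists (r + (U_(enum_rank u') + U_(enum_rank w')))%MM; split.
- rewrite {1}hm !mpolyXD -mulrBr; apply/in_ideal_genMl/in_ideal_gen_mem.
  by rewrite /var !enum_valK in hT.
- by rewrite hm !mdegD !mdeg1.
- by rewrite {1}hm !mweightD !mweightU !varK ltn_add2l.
Qed.

Lemma exists_standard_monomial m : exists2 m', standard m' & J ('X_[m] - 'X_[m']).
Proof.
have [N hN] := ubnP (mdeg m * weight n n - mweight m); elim: N m hN => // N IH m hN.
have [hs | hs] := boolP (standard m).
  by exists m => //; rewrite subrr; apply: in_ideal_gen0.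
have [m1 [hJ hd hlt]] := exchange_monomial hs.
have := mweight_le m1; rewrite hd => hle.
have [|m2 hs2 hJ2] := IH m1; first by lia.
exists m2 => //; rewrite -(subrK 'X_[m1] 'X_[m]) -addrA.
exact: in_ideal_genD.
Qed.

Lemma mnm_gt0P m : reflect (exists k, (0 < m k)%N) (m != 0%MM).
Proof.
apply: (iffP idP) => [hm | [k hk]]; last by apply: contraTneq hk => ->; rewrite mnm0E.
apply/existsP; apply: contraR hm => /existsPn hk; apply/eqP/mnmP => k.
by rewrite mnm0E; apply/eqP; rewrite -leqn0 leqNgt hk.
Qed.

Lemma Dmn0 : Dmn 0%MM = 0%MM.
Proof. by apply/mnmP => x; rewrite Dmn_coord mnm0E big1 // => k _; rewrite mnm0E. Qed.

Lemma Dmn_lab_gt0 m k : (0 < m k)%N -> (0 < Dmn m (lshift n (lab (var k))))%N.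
Proof. by move=> hk; rewrite Dmn_lshift_gt0; apply/existsP; exists k; rewrite hk eqxx. Qed.

Lemma standard_sub m m' : standard m -> standard (m - m')%MM.
Proof.
apply: contra => /existsP[a /existsP[b /and3P[ha hb hab]]].
rewrite !mnmBE in ha hb; apply/existsP; exists a; apply/existsP; exists b.
by rewrite hab (leq_trans ha (leq_subr _ _)) (leq_trans hb (leq_subr _ _)).
Qed.

Definition top m a :=
  (0 < m a)%N && [forall b, (0 < m b)%N ==> (key (var b) <= key (var a))%N].

Lemma exists_top m k : (0 < m k)%N -> exists a, top m a.
Proof.
move=> hk; have [a ha hmax] := @arg_maxnP _ k (fun b => 0 < m b)%N (fun b => key (var b)) hk.
by exists a; rewrite /top ha; apply/forallP => b; apply/implyP; exact: hmax.
Qed.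

Lemma top_st m a : standard m -> top m a ->
  st (var a) = [set c | (c != lab (var a)) && (0 < Dmn m (rshift n c))%N].
Proof.
move=> hs /andP[ha /forallP htop]; apply/setP => c; rewrite inE Dmn_rshift_gt0.
apply/idP/andP => [hc | [hca /existsP[b /andP[hb hcb]]]].
  split; last by apply/existsP; exists a; rewrite ha.
  by apply: contraNneq (lab_notin_st (var a)) => <-.
apply: contraNT hs => hc; apply/existsP; exists b; apply/existsP; exists a.
rewrite hb ha /exchangeable (implyP (htop b) hb) /=.
by apply/existsP; exists c; rewrite hcb hc hca.
Qed.

Lemma top_lab_le m1 m2 a1 a2 : Dmn m1 = Dmn m2 -> top m1 a1 -> top m2 a2 ->
  (lab (var a1) <= lab (var a2))%N.
Proof.
move=> hD /andP[ha1 _] /andP[_ /forallP htop2].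
move: (Dmn_lab_gt0 ha1); rewrite hD Dmn_lshift_gt0 => /existsP[b /andP[hb /eqP <-]].
by have [] := key_leP (implyP (htop2 b) hb).
Qed.

Lemma standard_Dmn_inj m1 m2 : standard m1 -> standard m2 -> Dmn m1 = Dmn m2 -> m1 = m2.
Proof.
have [d] := ubnP (mdeg m1); elim: d m1 m2 => // d IH m1 m2 hd s1 s2 hD.
have [e1 | /mnm_gt0P[k1 hk1]] := eqVneq m1 0%MM.
  rewrite e1 in hD *; apply/esym/eqP/mnm_gt0P => -[k hk].
  by move: (Dmn_lab_gt0 hk); rewrite -hD Dmn0 mnm0E.
have [a1 t1] := exists_top hk1.
have [k2 hk2] : exists k, (0 < m2 k)%N.
  move: (Dmn_lab_gt0 (andP t1).1); rewrite hD Dmn_lshift_gt0 => /existsP[k /andP[hk _]].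
  by exists k.
have [a2 t2] := exists_top hk2.
have el : lab (var a1) = lab (var a2).
  by apply/val_inj/eqP; rewrite eqn_leq (top_lab_le hD t1 t2) (top_lab_le (esym hD) t2 t1).
have ea : a1 = a2.
  by apply/enum_val_inj/V_inj; rewrite // (top_st s1 t1) (top_st s2 t2) hD el.
subst a2.
have le1 : (U_(a1) <= m1)%MM by rewrite lep1mP -lt0n (andP t1).1.
have le2 : (U_(a1) <= m2)%MM by rewrite lep1mP -lt0n (andP t2).1.
rewrite -(submK le1) -(submK le2); congr (_ + _)%MM.
apply: IH; rewrite ?standard_sub //.
  by move: hd; rewrite -{1}(submK le1) mdegD mdeg1 addn1 ltnS.
by apply: (@addIm _ (Dv (var a1))); rewrite -DmnU -!DmnD !submK.
Qed.

Lemma exists_standard_rep q :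
  exists q', J (q - q') /\ forall m, q'@_m != 0 -> standard m.
Proof.
rewrite {1}(mpolyE q); elim: (msupp q) => [|m s [q' [hJ hstd]]].
  exists 0; split => [|m]; last by rewrite mcoeff0 eqxx.
  by rewrite big_nil subrr; apply: in_ideal_gen0.
have [m' hm' hJm] := exists_standard_monomial m.
exists (q@_m *: 'X_[m'] + q'); split.
  rewrite big_cons opprD addrACA -scalerBr -mul_mpolyC.
  exact: in_ideal_genD (in_ideal_genMl _ hJm) hJ.
move=> g; rewrite mcoeffD mcoeffZ mcoeffX.
case: (eqVneq m' g) => [<- // | _]; rewrite mulr0 add0r; exact: hstd.
Qed.

Lemma standard_rep_ker_eq0 q : phi q = 0 -> (forall m, q@_m != 0 -> standard m) -> q = 0.
Proof.
move=> hq hstd; apply/mpolyP => g; rewrite mcoeff0.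
have [hg | hg] := boolP (standard g); last exact/eqP/(contraNT (hstd g) hg).
have := congr1 (mcoeff (Dmn g)) hq; rewrite mcoeff0 phiE raddf_sum /= => <-.
rewrite {1}(mpolyE q) raddf_sum /=; apply: eq_big_seq => m hm.
rewrite !mcoeffZ !mcoeffX; suff -> : (m == g) = (Dmn m == Dmn g) by [].
apply/eqP/eqP => [<- // | e].
by apply: standard_Dmn_inj e => //; apply: hstd; rewrite -mcoeff_msupp.
Qed.

End Kernel.

Theorem theorem3p5 (K : fieldType) (n : nat) (p : Xring K n) :
  phi p = 0 <-> in_ideal_gen (Tgens K n) p.
Proof.
split; last exact: phi_in_ideal_eq0.
move=> hp; have [q [hJ hstd]] := exists_standard_rep p.
have := phi_in_ideal_eq0 hJ; rewrite phiB hp sub0r => /eqP; rewrite oppr_eq0 => /eqP hq.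
by move: hJ; rewrite (standard_rep_ker_eq0 hq hstd) subr0.
Qed.
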